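(* Let $I\subset\mathbb{R}$ be an open interval, $W\subset I$ countable, and $\hat I$ the divided interval of $I$ at $W$. If $\mathcal{F}$ is a $G$ local system on $\hat I$ (for any $k$-linear group $G$), then for every basis interval $H\subset\hat I$ the restriction map $\mathcal{F}(H)\to\mathcal{F}(\operatorname{trim} H)$ is an isomorphism.
   Context: The divided interval of $I$ at $W$ is the set $\hat I = \{w^{L}, \hat w, w^{R} : w\in W\}\sqcup (I\smallsetminus W)$, with $\pi\colon\hat I\to I$ sending $w^L,\hat w,w^R$ to $w$ and fixing $I\smallsetminus W$; it is totally ordered so that $\pi$ is order preserving and $w^L<\hat w<w^R$. For $a,b\in\hat I\cup\{\pm\infty\}$, $(a,b)=\{s: a<s<b\}$; basis intervals are the nonempty $(a,b)$ other than those with $a=w^L$ or $b=w^R$, and they generate the topology of $\hat I$. For a basis interval $H$, $\operatorname{trim}H$ is $H$ with its least element and its greatest element removed (if they exist); it is again a basis interval. A $k$-linear group $G$ is a subgroup of $\mathrm{GL}(R_G)$ for a finite-dimensional $k$-vector space $R_G$; $\mathcal{C}_G$ is the smallest subcategory of $k$-vector spaces containing $R_G$ and the morphisms $G$ and having all limits and filtered colimits; a $G$ local system is a locally constant sheaf with values in $\mathcal{C}_G$ all of whose stalks are isomorphic to $R_G$. *)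

From HB Require Import structures.
From mathcomp Require Import all_boot all_order all_algebra.
From mathcomp Require Import all_classical all_reals.
Set Implicit Arguments. Unset Strict Implicit. Unset Printing Implicit Defensive.
Import Order.TTheory GRing.Theory Num.Theory.
Local Open Scope classical_set_scope.
Local Open Scope ring_scope.

Definition open_interval (R : realType) (I : set R) : Prop :=
  exists a b : \bar R, I = [set x | (a < x%:E)%E /\ (x%:E < b)%E].

(* An element is a pair (x, t) with x in I and t in {0,1,2}; for x in W the  *)
(* tags 0,1,2 stand for x^L, \hat x, x^R; for x in I \ W only the tag 1 is   *)
(* allowed (the point x itself).  pi = first projection.                      *)
Section Divided.
Variables (R : realType) (I W : set R).

Definition hatI : Type :=
  {p : R * 'I_3 | I p.1 /\ (~ W p.1 -> nat_of_ord p.2 = 1%N)}.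

Definition hpi (s : hatI) : R := (sval s).1.
Definition htag (s : hatI) : nat := nat_of_ord (sval s).2.

(* total order: pi order preserving and w^L < \hat w < w^R *)
Definition hlt (s t : hatI) : Prop :=
  hpi s < hpi t \/ (hpi s = hpi t /\ (htag s < htag t)%N).

Inductive hext := HNegInf | HPt of hatI | HPosInf.

Definition hext_lt (a : hext) (s : hatI) : Prop :=
  match a with HNegInf => True | HPt x => hlt x s | HPosInf => False end.
Definition hext_gt (b : hext) (s : hatI) : Prop :=
  match b with HNegInf => False | HPt x => hlt s x | HPosInf => True end.

Definition hinterval (a b : hext) : set hatI :=
  [set s | hext_lt a s /\ hext_gt b s].

Definition is_left_copy (a : hext) : Prop :=
  match a with HPt x => W (hpi x) /\ htag x = 0%N | _ => False end.
Definition is_right_copy (b : hext) : Prop :=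
  match b with HPt x => W (hpi x) /\ htag x = 2%N | _ => False end.

Definition basis_interval (H : set hatI) : Prop :=
  exists a b : hext, H = hinterval a b /\ hinterval a b !=set0 /\
    ~ is_left_copy a /\ ~ is_right_copy b.

Definition hopen (U : set hatI) : Prop :=
  forall T : set hatI -> Prop,
    (forall H, basis_interval H -> T H) ->
    T setT ->
    (forall A B, T A -> T B -> T (A `&` B)) ->
    (forall (J : Type) (F : J -> set hatI), (forall j, T (F j)) ->
        T (\bigcup_j F j)) ->
    T U.

Definition hle (s t : hatI) : Prop := s = t \/ hlt s t.
Definition least_of (H : set hatI) (s : hatI) : Prop :=
  H s /\ forall t, H t -> hle s t.
Definition greatest_of (H : set hatI) (s : hatI) : Prop :=
  H s /\ forall t, H t -> hle t s.
Definition trim (H : set hatI) : set hatI :=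
  [set s | H s /\ ~ least_of H s /\ ~ greatest_of H s].

Lemma trim_sub (H : set hatI) : trim H `<=` H.
Proof. by move=> s [] . Qed.

End Divided.

Section LinearGroup.
Variables (k : fieldType).

Definition linear_group (RG : vectType k) (G : (RG -> RG) -> Prop) : Prop :=
  [/\ forall g, G g -> linear g /\ bijective g,
      G id,
      forall g h, G g -> G h -> G (g \o h) &
      forall g, G g -> exists2 h, G h & cancel g h /\ cancel h g].

Record smallcat := SmallCat {
  cobj : Type;
  chom : cobj -> cobj -> Type;
  cid : forall i, chom i i;
  ccomp : forall i j l, chom j l -> chom i j -> chom i l;
  cid_l : forall i j (f : chom i j), ccomp (cid j) f = f;
  cid_r : forall i j (f : chom i j), ccomp f (cid i) = f;
  ccompA : forall i j l m (f : chom l m) (g : chom j l) (h : chom i j),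
      ccomp f (ccomp g h) = ccomp (ccomp f g) h }.

Record diagram (J : smallcat) := Diagram {
  dobj : cobj J -> lmodType k;
  dmap : forall i j, chom i j -> dobj i -> dobj j;
  dmap_lin : forall i j (f : chom i j), linear (dmap f);
  dmap_id : forall i x, dmap (cid i) x = x;
  dmap_comp : forall i j l (f : chom j l) (g : chom i j) x,
      dmap (ccomp f g) x = dmap f (dmap g x) }.
Arguments dobj {J} d i.
Arguments dmap {J} d {i j} _ _.

Definition is_limit (J : smallcat) (D : diagram J) (L : lmodType k)
    (p : forall i, L -> dobj D i) : Prop :=
  (forall i, linear (p i)) /\
  (forall i j (f : chom i j) x, dmap D f (p i x) = p j x) /\
  (forall x : forall i, dobj D i,
      (forall i j (f : chom i j), dmap D f (x i) = x j) ->
      exists! l : L, forall i, p i l = x i).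

Arguments is_limit {J} D L p.

Definition filtered (J : smallcat) : Prop :=
  [/\ inhabited (cobj J),
      forall i j : cobj J, exists l, inhabited (chom i l) /\ inhabited (chom j l) &
      forall (i j : cobj J) (f g : chom i j), exists l (h : chom j l),
         ccomp h f = ccomp h g].

Definition is_filtered_colimit (J : smallcat) (D : diagram J) (C : lmodType k)
    (q : forall i, dobj D i -> C) : Prop :=
  (forall i, linear (q i)) /\
  (forall i j (f : chom i j) x, q j (dmap D f x) = q i x) /\
  (forall c : C, exists i x, q i x = c) /\
  (forall i j x y, q i x = q j y ->
      exists l (f : chom i l) (g : chom j l), dmap D f x = dmap D g y).

Arguments is_filtered_colimit {J} D C q.

Definition Objs := lmodType k -> Prop.
Definition Mors := forall V W : lmodType k, (V -> W) -> Prop.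

Definition CG_closed (RG : vectType k) (G : (RG -> RG) -> Prop)
    (Ob : Objs) (Mor : Mors) : Prop :=
  [/\ forall (V W : lmodType k) (f : V -> W), Mor V W f -> Ob V /\ Ob W /\ linear f,
      (forall V : lmodType k, Ob V -> Mor V V id) /\
      (forall (U V W : lmodType k) (f : V -> W) (g : U -> V), Mor V W f -> Mor U V g ->
          Mor U W (f \o g)),
      Ob (RG : lmodType k) /\ (forall g, G g -> Mor RG RG g),
      forall (J : smallcat) (D : diagram J),
        (forall i, Ob (dobj D i)) ->
        (forall i j (f : chom i j), Mor _ _ (dmap D f)) ->
        forall L p, is_limit D L p ->
          Ob L /\ (forall i, Mor _ _ (p i)) /\
          (forall (V : lmodType k) (c : forall i, V -> dobj D i) (m : V -> L),
             Ob V -> (forall i, Mor _ _ (c i)) ->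
             (forall v i, p i (m v) = c i v) -> Mor _ _ m) &
      forall (J : smallcat) (D : diagram J), filtered J ->
        (forall i, Ob (dobj D i)) ->
        (forall i j (f : chom i j), Mor _ _ (dmap D f)) ->
        forall C q, is_filtered_colimit D C q ->
          Ob C /\ (forall i, Mor _ _ (q i)) /\
          (forall (V : lmodType k) (c : forall i, dobj D i -> V) (m : C -> V),
             Ob V -> (forall i, Mor _ _ (c i)) ->
             (forall i x, m (q i x) = c i x) -> Mor _ _ m)].

Definition CG_obj (RG : vectType k) (G : (RG -> RG) -> Prop) (V : lmodType k)
  : Prop := forall Ob Mor, CG_closed G Ob Mor -> Ob V.
Definition CG_mor (RG : vectType k) (G : (RG -> RG) -> Prop)
    (V W : lmodType k) (f : V -> W) : Prop :=
  forall Ob Mor, CG_closed G Ob Mor -> Mor V W f.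

End LinearGroup.

Section Sheaves.
Variables (k : fieldType) (X : Type) (op : set X -> Prop).

Record presheaf := Presheaf {
  sec : set X -> lmodType k;
  res : forall U V : set X, V `<=` U -> sec U -> sec V;
  res_lin : forall U V (h : V `<=` U), linear (res h);
  res_id : forall U (h : U `<=` U) s, op U -> res h s = s;
  res_comp : forall U V W (h1 : V `<=` U) (h2 : W `<=` V) (h3 : W `<=` U) s,
      op U -> op V -> op W -> res h2 (res h1 s) = res h3 s }.
Arguments sec p _.
Arguments res p {U V} _ _.

Definition is_sheaf (F : presheaf) : Prop :=
  forall (U : set X) (J : Type) (Us : J -> set X)
         (hs : forall j, Us j `<=` U),
    op U -> (forall j, op (Us j)) -> U = \bigcup_j Us j ->
    (forall s t : sec F U, (forall j, res F (hs j) s = res F (hs j) t) -> s = t) /\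
    (forall x : forall j, sec F (Us j),
       (forall i j (hi : Us i `&` Us j `<=` Us i) (hj : Us i `&` Us j `<=` Us j),
          res F hi (x i) = res F hj (x j)) ->
       exists s : sec F U, forall j, res F (hs j) s = x j).

Definition locally_constant_on (A : Type) (O : set X) (f : X -> A) : Prop :=
  forall x, O x -> exists V, [/\ op V, V x, V `<=` O & forall y, V y -> f y = f x].

(* F restricted to the open set U is isomorphic to the constant sheaf with   *)
(* value A, whose sections over O are the locally constant functions O -> A *)
Definition constant_on (F : presheaf) (U : set X) (A : lmodType k) : Prop :=
  exists phi : forall O, sec F O -> X -> A,
   forall O, op O -> O `<=` U ->
   [/\ forall a (s t : sec F O) y, O y -> phi O (a *: s + t) y = a *: phi O s y + phi O t y,
       forall s, locally_constant_on O (phi O s),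
       forall s, (forall y, O y -> phi O s y = 0) -> s = 0,
       forall f, locally_constant_on O f -> exists s, forall y, O y -> phi O s y = f y &
       forall V (h : V `<=` O) s y, op V -> V y -> phi V (res F h s) y = phi O s y].

(* the stalk of F at x is isomorphic to B: B (with the germ maps) is a colimit *)
(* of the directed system F(U), U open neighbourhood of x                     *)
Definition stalk_iso (F : presheaf) (x : X) (B : lmodType k) : Prop :=
  exists germ : forall U, sec F U -> B,
  [/\ forall U, op U -> U x -> linear (germ U),
      forall U V (h : V `<=` U) s, op U -> op V -> V x -> germ V (res F h s) = germ U s,
      forall b, exists U s, [/\ op U, U x & germ U s = b] &
      forall U s, op U -> U x -> germ U s = 0 ->
        exists V (h : V `<=` U), [/\ op V, V x & res F h s = 0]].

End Sheaves.
Arguments sec {k X op} p _.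
Arguments res {k X op} p {U V} _ _.

Definition G_local_system (k : fieldType) (X : Type) (op : set X -> Prop)
    (RG : vectType k) (G : (RG -> RG) -> Prop) (F : presheaf k op) : Prop :=
  [/\ is_sheaf F,
      (forall U, op U -> CG_obj G (sec F U)),
      (forall U V (h : V `<=` U), op U -> op V -> CG_mor G (res F h)),
      (forall x, exists U A, [/\ op U, U x, CG_obj G A & constant_on F U A]) &
      (forall x, stalk_iso F x (RG : lmodType k))].

(* A least element of a basis interval is necessarily a right copy w^R and a
   greatest one a left copy w^L, so trim H arises from the interval H by deleting
   at most two such endpoints, one at a time.  It therefore suffices to show that
   restricting F from an open A to A \ {p} is bijective when A \ {p} is open and
   order-convex.  Choose a basis neighbourhood N of p on which F is constant.
   Since p is not isolated and sections over N are locally constant, a section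
   over N is determined by its values off p (injectivity).  And N meets A \ {p}
   in an order-convex set, so, the real points being dense and real intervals
   connected, every locally constant function on it is constant, and a section
   over A \ {p} extends across p (surjectivity). *)

From HB Require Import structures.
From mathcomp Require Import all_boot all_order all_algebra.
From mathcomp Require Import all_classical all_reals.
From mathcomp Require Import lra zify.
Set Implicit Arguments. Unset Strict Implicit. Unset Printing Implicit Defensive.
Import Order.TTheory GRing.Theory Num.Theory.
Local Open Scope classical_set_scope.
Local Open Scope ring_scope.

Lemma linearB_prop (k : fieldType) (V W : lmodType k) (f : V -> W) :
  linear f -> forall x y, f (x - y) = f x - f y.
Proof. by move=> lin_f x y; rewrite -scaleN1r addrC lin_f scaleN1r addrC. Qed.

Lemma linear0_prop (k : fieldType) (V W : lmodType k) (f : V -> W) :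
  linear f -> f 0 = 0.
Proof. by move=> lin_f; rewrite -(subrr 0) linearB_prop // subrr. Qed.

Section SheafRestriction.
Variables (k : fieldType) (X : Type) (op : set X -> Prop) (F : presheaf k op).

Lemma res_irrelevance U V (h h' : V `<=` U) s : res F h s = res F h' s.
Proof. by rewrite (Prop_irrelevance h h'). Qed.

Lemma res_bijective_eq (A B B' : set X) (h : B `<=` A) (h' : B' `<=` A) :
  B = B' -> bijective (res F h) -> bijective (res F h').
Proof. by move=> E; subst B'; rewrite (Prop_irrelevance h' h). Qed.

End SheafRestriction.

Section TwoSetCover.
Variables (k : fieldType) (X : Type) (op : set X -> Prop) (F : presheaf k op).
Hypothesis F_sheaf : is_sheaf F.
Hypothesis opI : forall A B, op A -> op B -> op (A `&` B).
Variables (A N B : set X) (hN : N `<=` A) (hB : B `<=` A).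
Hypotheses (opA : op A) (opN : op N) (opB : op B) (A_cover : A = N `|` B).

Let cover (j : bool) := if j then N else B.

Let cover_sub j : cover j `<=` A. Proof. by case: j. Qed.

Let cover_open j : op (cover j). Proof. by case: j. Qed.

Let A_bigcup : A = \bigcup_j cover j.
Proof.
rewrite A_cover; apply/seteqP; split=> [y [Ny|By]|y [[] _ /= ?]];
  by [exists true|exists false|left|right].
Qed.

Lemma sheaf_locality2 (s t : sec F A) :
  res F hN s = res F hN t -> res F hB s = res F hB t -> s = t.
Proof.
move=> EN EB; apply: (F_sheaf cover_sub opA cover_open A_bigcup).1 => -[].
- by rewrite !(res_irrelevance _ hN).
- by rewrite !(res_irrelevance _ hB).
Qed.

Lemma sheaf_glue2 (sN : sec F N) (sB : sec F B) :
  (forall O (h1 : O `<=` N) (h2 : O `<=` B), op O -> res F h1 sN = res F h2 sB) ->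
  exists s, res F hN s = sN /\ res F hB s = sB.
Proof.
move=> agree.
pose x j : sec F (cover j) := if j as j0 return sec F (cover j0) then sN else sB.
have [|s Es] := (F_sheaf cover_sub opA cover_open A_bigcup).2 x.
  move=> [] [] hi hj /=; rewrite ?(res_irrelevance hi hj) //.
  - exact/agree/opI.
  - by apply/esym/agree/opI.
by exists s; split; [rewrite (res_irrelevance _ (@cover_sub true)) Es|
  rewrite (res_irrelevance _ (@cover_sub false)) Es].
Qed.

End TwoSetCover.

Section RemovePoint.
Variables (k : fieldType) (X : Type) (op : set X -> Prop) (F : presheaf k op).
Hypothesis F_sheaf : is_sheaf F.
Hypothesis opI : forall A B, op A -> op B -> op (A `&` B).
Variables (U : set X) (C : lmodType k) (phi : forall O, sec F O -> X -> C).
Arguments phi : clear implicits.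
(* [phi] and [phiP] unfold [constant_on F U C]. *)
Hypothesis phiP : forall O, op O -> O `<=` U ->
  [/\ forall a (s t : sec F O) y, O y -> phi O (a *: s + t) y = a *: phi O s y + phi O t y,
      forall s, locally_constant_on op O (phi O s),
      forall s, (forall y, O y -> phi O s y = 0) -> s = 0,
      forall f, locally_constant_on op O f -> exists s, forall y, O y -> phi O s y = f y &
      forall V (h : V `<=` O) s y, op V -> V y -> phi V (res F h s) y = phi O s y].

Let phiB O s t y : op O -> O `<=` U -> O y -> phi O (s - t) y = phi O s y - phi O t y.
Proof.
move=> oO OU Oy; have [phi_lin _ _ _ _] := phiP oO OU.
by rewrite -scaleN1r addrC phi_lin // scaleN1r addrC.
Qed.

Let phi0 O y : op O -> O `<=` U -> O y -> phi O 0 y = 0.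
Proof. by move=> oO OU Oy; rewrite -(subrr 0) phiB // subrr. Qed.

Variables (A B N : set X) (p : X).
Hypotheses (opA : op A) (opB : op B) (opN : op N).
Hypotheses (BA : B `<=` A) (NA : N `<=` A) (NU : N `<=` U) (Np : N p).
Hypothesis A_minus_B : forall y, A y -> ~ B y -> y = p.
Hypothesis p_not_isolated : forall V, op V -> V p -> exists2 y, V y & y <> p.
Hypothesis NB_const : forall f : X -> C, locally_constant_on op (N `&` B) f ->
  forall y1 y2, (N `&` B) y1 -> (N `&` B) y2 -> f y1 = f y2.

Let NB y : N y -> y <> p -> B y.
Proof. by move=> Ny yp; apply: contrapT => nBy; exact/yp/A_minus_B/nBy/NA. Qed.

Let A_cover : A = N `|` B.
Proof.
apply/seteqP; split=> [y Ay|y [/NA|/BA] //].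
by have [By|nBy] := pselect (B y); [right|left; rewrite (A_minus_B Ay nBy)].
Qed.

Let opNB : op (N `&` B). Proof. exact: opI. Qed.
Let NBU : N `&` B `<=` U. Proof. by move=> y [/NU]. Qed.
Let NB_N : N `&` B `<=` N. Proof. by move=> y []. Qed.
Let NB_B : N `&` B `<=` B. Proof. by move=> y []. Qed.

(* The value at [p] equals nearby values off [p], since [p] is not isolated. *)
Lemma vanish_off_point (u : sec F N) :
  (forall y, N y -> y <> p -> phi N u y = 0) -> u = 0.
Proof.
move=> u0; have [_ lc_phi phi_inj _ _] := phiP opN NU.
apply: phi_inj => y Ny; have [->|yp] := pselect (y = p); last exact: u0.
have [V [oV Vp VN Vc]] := lc_phi u p Np.
have [z Vz zp] := p_not_isolated oV Vp.
by rewrite -(Vc z Vz); apply: u0 => //; exact: VN.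
Qed.

Lemma res_remove_point_inj (h : B `<=` A) : injective (res F h).
Proof.
move=> s1 s2 E; apply/eqP; rewrite -subr_eq0; apply/eqP; set s := s1 - s2.
have s0 : res F h s = 0 by rewrite linearB_prop ?E ?subrr //; exact: res_lin.
apply: (sheaf_locality2 (hN := NA) (hB := BA) F_sheaf opA opN opB A_cover);
  rewrite linear0_prop; try exact: res_lin; last by rewrite (res_irrelevance _ h).
apply: vanish_off_point => y Ny yp; have NBy : (N `&` B) y by split; [|exact: NB].
have [_ _ _ _ phiN_res] := phiP opN NU.
rewrite -(phiN_res _ NB_N) // (res_comp _ _ (subset_trans NB_N NA)) //.
rewrite -(res_comp h NB_B) // s0 linear0_prop; last exact: res_lin.
exact: phi0.
Qed.

Lemma res_remove_point_surj (h : B `<=` A) t : exists s, res F h s = t.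
Proof.
have [_ lc_phi _ _ phi_res] := phiP opNB NBU.
set f := phi (N `&` B) (res F NB_B t).
have [y0 Ny0 y0p] := p_not_isolated opN Np.
have NBy0 : (N `&` B) y0 by split; [|exact: NB].
have [_ _ _ phi_surj phiN_res] := phiP opN NU.
have [sN sNE] : exists sN, forall y, N y -> phi N sN y = f y0.
  by apply: phi_surj => y Ny; exists N; split.
have agree O (h1 : O `<=` N) (h2 : O `<=` B) : op O -> res F h1 sN = res F h2 t.
  move=> oO; have OU : O `<=` U by move=> y /h1/NU.
  have h3 : O `<=` N `&` B by move=> y Oy; split; [exact: h1|exact: h2].
  have [_ _ phi_inj _ _] := phiP oO OU.
  apply/eqP; rewrite -subr_eq0; apply/eqP; apply: phi_inj => y Oy.
  rewrite phiB // (phiN_res _ h1) // sNE; last exact: h1.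
  rewrite -(res_comp NB_B h3 h2) // (phi_res _ h3) //.
  by rewrite -(NB_const (lc_phi (res F NB_B t)) NBy0 (h3 y Oy)) subrr.
have [s [_ Es]] := sheaf_glue2 F_sheaf opI NA BA opA opN opB A_cover agree.
by exists s; rewrite (res_irrelevance _ BA).
Qed.

End RemovePoint.

Lemma segment_locally_constant (R : realType) (T : Type) (g : R -> T) (x y : R) :
  x <= y ->
  (forall r, x <= r <= y -> exists2 e, 0 < e &
     forall r', x <= r' <= y -> `|r - r'| < e -> g r' = g r) ->
  g x = g y.
Proof.
move=> xy g_loc.
pose A := [set z | x <= z <= y /\ forall u, x <= u <= z -> g u = g x].
have Ax : A x.
  split=> [|u /andP[xu ux]]; first by rewrite lexx xy.
  by have -> : u = x by apply/eqP; rewrite eq_le ux xu.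
have supA : has_sup A by split; [exists x|exists y => z [/andP[]]].
set m := sup A.
have xm : x <= m := sup_upper_bound supA Ax.
have my : m <= y by apply: ge_sup; [exists x|move=> z [/andP[]]].
have [e e0 near_m] := g_loc m (introT andP (conj xm my)).
have [z [xzy gz] mz] := sup_adherent e0 supA; rewrite -/m in mz.
have zm : z <= m := sup_upper_bound supA (conj xzy gz).
move/andP: xzy => [xz zy].
have gm : g m = g x.
  by rewrite -(gz z) ?xz ?lexx //; apply/esym/near_m; rewrite ?xz ?zy // ger0_norm; lra.
have below_m u : x <= u <= m -> g u = g x.
  move=> /andP[xu um]; have [uz|zu] := lerP u z; first by apply: gz; rewrite xu uz.
  by rewrite -gm; apply: near_m; [rewrite xu (le_trans um my)|rewrite ger0_norm; lra].
have [my'|ym] := ltP m y; last by rewrite (below_m y) // xy ym.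
exfalso; pose v := Num.min (m + e / 2) y.
have Av : A v.
  have xv : x <= v by rewrite /v le_min xy andbT; lra.
  split=> [|u /andP[xu uv]]; first by rewrite xv /v ge_min lexx orbT.
  have [um|mu] := lerP u m; first by apply: below_m; rewrite xu um.
  move: uv; rewrite /v le_min => /andP[ue uy].
  by rewrite -gm; apply: near_m; [rewrite xu uy|rewrite ltr0_norm; lra].
have : v <= m := sup_upper_bound supA Av.
by rewrite /v ge_min => /orP[]; lra.
Qed.

Section DividedInterval.
Variables (R : realType) (I W : set R).
Hypothesis I_open : open_interval I.
Local Notation X := (hatI I W).
Local Notation hext := (hext I W).

Lemma hatI_ext (s t : X) : hpi s = hpi t -> htag s = htag t -> s = t.
Proof.
case: s t => [[x i] Hs] [[y j] Ht]; rewrite /hpi /htag /= => exy eij.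
subst y; have eij' : i = j by apply: val_inj.
by subst j; congr exist; exact: Prop_irrelevance.
Qed.

Lemma htag_lt3 (s : X) : (htag s < 3)%N. Proof. exact: ltn_ord. Qed.

Lemma hpiI (s : X) : I (hpi s). Proof. exact: (proj2_sig s).1. Qed.

Lemma htagW (s : X) : htag s <> 1%N -> W (hpi s).
Proof. by move=> s1; apply: contrapT => nW; exact/s1/(proj2_sig s).2. Qed.

Lemma hlt_trans (s t u : X) : hlt s t -> hlt t u -> hlt s u.
Proof.
move=> [st|[est tst]] [tu|[etu ttu]]; rewrite /hlt.
- by left; exact: lt_trans tu.
- by left; rewrite -etu.
- by left; rewrite est.
- by right; split; [rewrite est|exact: ltn_trans ttu].
Qed.

Lemma hlt_irr (s : X) : ~ hlt s s.
Proof. by move=> [|[_]]; rewrite ?ltxx ?ltnn. Qed.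

Lemma hle_hlt_absurd (s t : X) : hle s t -> hlt t s -> False.
Proof. by move=> [<-|st] ts; [exact: hlt_irr ts|exact: hlt_irr (hlt_trans st ts)]. Qed.

Lemma hlt_total (s t : X) : [\/ s = t, hlt s t | hlt t s].
Proof.
rewrite /hlt; have [st|ts|e] := ltgtP (hpi s) (hpi t); [by constructor 2; left
  |by constructor 3; left|].
have [st|ts|e'] := ltngtP (htag s) (htag t); [by constructor 2; right
  |by constructor 3; right|by constructor 1; exact: hatI_ext].
Qed.

Lemma hext_lt_trans (a : hext) (s t : X) : hext_lt a s -> hlt s t -> hext_lt a t.
Proof. by case: a => //= q qs st; exact: hlt_trans st. Qed.

Lemma hext_gt_trans (b : hext) (s t : X) : hext_gt b t -> hlt s t -> hext_gt b s.
Proof. by case: b => //= q tq st; exact: hlt_trans tq. Qed.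

Definition real_pt (r : R) (Ir : I r) : X :=
  exist _ (r, Ordinal (isT : (1 < 3)%N)) (conj Ir (fun _ => erefl)).

Lemma real_pt_le r1 r2 (I1 : I r1) (I2 : I r2) :
  r1 <= r2 -> hle (real_pt I1) (real_pt I2).
Proof.
by rewrite le_eqVlt => /predU1P[e|lt]; [left; exact: hatI_ext|right; left].
Qed.

Lemma I_convex x y z : I x -> I y -> x <= z -> z <= y -> I z.
Proof.
case: I_open => a [b ->] [ax xb] [ay yb] xz zy; split.
  by apply: lt_le_trans ax _; rewrite lee_fin.
by apply: le_lt_trans yb; rewrite lee_fin.
Qed.

Lemma I_lt x : I x -> exists2 y, I y & y < x.
Proof.
case: I_open => a [b ->] [ax xb]; case: a ax => [r| |] // ax.
- rewrite lte_fin in ax; exists ((r + x) / 2); last lra.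
  by split; [|apply: lt_trans xb]; rewrite lte_fin; lra.
- exists (x - 1); last lra.
  by split; [exact: ltNyr|apply: lt_trans xb; rewrite lte_fin; lra].
Qed.

Lemma I_gt x : I x -> exists2 y, I y & x < y.
Proof.
case: I_open => a [b ->] [ax xb]; case: b xb => [r| |] // xb.
- rewrite lte_fin in xb; exists ((r + x) / 2); last lra.
  by split; [apply: lt_trans ax _|]; rewrite lte_fin; lra.
- exists (x + 1); last lra.
  by split; [apply: lt_trans ax _; rewrite lte_fin; lra|exact: ltry].
Qed.

Definition hext_below (a : hext) (x : R) : Prop :=
  match a with HNegInf => True | HPt q => hpi q < x | HPosInf => False end.
Definition hext_above (b : hext) (x : R) : Prop :=
  match b with HNegInf => False | HPt q => x < hpi q | HPosInf => True end.

Lemma below_real_pt (a : hext) r (Ir : I r) : hext_below a r -> hext_lt a (real_pt Ir).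
Proof. by case: a => //= q; left. Qed.

Lemma above_real_pt (b : hext) r (Ir : I r) : hext_above b r -> hext_gt b (real_pt Ir).
Proof. by case: b => //= q; left. Qed.

(* [a < s] with [hpi a = hpi s] and [htag s <= 1] forces [a] to be a left copy. *)
Lemma below_hpi (a : hext) (s : X) :
  ~ is_left_copy a -> hext_lt a s -> (htag s <= 1)%N -> hext_below a (hpi s).
Proof.
case: a => //= q nl [//|[e tq]] ts; have tq0 : htag q = 0%N by lia.
by case: nl; split; [apply: htagW; rewrite tq0|].
Qed.

Lemma above_hpi (b : hext) (s : X) :
  ~ is_right_copy b -> hext_gt b s -> (1 <= htag s)%N -> hext_above b (hpi s).
Proof.
case: b => //= q nr [//|[e tq]] ts; have tq2 : htag q = 2%N by have := htag_lt3 q; lia.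
by case: nr; split; [apply: htagW; rewrite tq2|].
Qed.

Lemma below_interpolate (a : hext) x : I x -> hext_below a x ->
  exists r, [/\ I r, hext_below a r & r < x].
Proof.
case: a => //= [|q] Ix ax; first by have [y Iy yx] := I_lt Ix; exists y.
exists ((hpi q + x) / 2); split => //=; [|lra|lra].
by apply: (I_convex (hpiI q) Ix); lra.
Qed.

Lemma above_interpolate (b : hext) x : I x -> hext_above b x ->
  exists r, [/\ I r, hext_above b r & x < r].
Proof.
case: b => //= [q|] Ix xb; last by have [y Iy xy] := I_gt Ix; exists y.
exists ((hpi q + x) / 2); split => //=; [|lra|lra].
by apply: (I_convex Ix (hpiI q)); lra.
Qed.

Lemma below_open (a : hext) r : hext_below a r ->
  exists2 e, 0 < e & forall r', r - e < r' -> hext_below a r'.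
Proof.
case: a => //= [|q] ar; first by exists 1.
by exists (r - hpi q); [lra|move=> r' ?; lra].
Qed.

Lemma above_open (b : hext) r : hext_above b r ->
  exists2 e, 0 < e & forall r', r' < r + e -> hext_above b r'.
Proof.
case: b => //= [q|] rb; last by exists 1.
by exists (hpi q - r); [lra|move=> r' ?; lra].
Qed.

Lemma hinterval_real_pt (a b : hext) (s : X) :
  ~ is_left_copy a -> ~ is_right_copy b -> hinterval a b s ->
  exists r (Ir : I r), r <> hpi s /\ hinterval a b (real_pt Ir).
Proof.
move=> nl nr [as_ sb]; have [ts|ts] := leqP (htag s) 1.
- have [r [Ir ar rs]] := below_interpolate (hpiI s) (below_hpi nl as_ ts).
  exists r, Ir; split; first by move=> e; rewrite e ltxx in rs.
  by split; [exact: below_real_pt|apply: hext_gt_trans sb _; left].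
- have [r [Ir rb sr]] := above_interpolate (hpiI s) (above_hpi nr sb (ltnW ts)).
  exists r, Ir; split; first by move=> e; rewrite e ltxx in sr.
  by split; [apply: hext_lt_trans as_ _; left|exact: above_real_pt].
Qed.

Lemma hopenI (A B : set X) : hopen A -> hopen B -> hopen (A `&` B).
Proof. by move=> oA oB T Tb TT TI TU; exact: TI (oA T Tb TT TI TU) (oB T Tb TT TI TU). Qed.

Lemma hinterval_open (a b : hext) :
  ~ is_left_copy a -> ~ is_right_copy b -> hopen (hinterval a b).
Proof.
move=> nl nr T Tb _ _ TU; have [ne|e] := pselect (hinterval a b !=set0).
  by apply: Tb; exists a, b.
have -> : hinterval a b = \bigcup_(v in [set: void]) (fun v : void => match v with end) v.
  by apply/seteqP; split=> [s Hs|s [[]]]; case: e; exists s.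
by apply: TU => -[].
Qed.

Definition basis_nbhd (U : set X) (s : X) : Prop := exists a b : hext,
  [/\ hext_lt a s, hext_gt b s, ~ is_left_copy a, ~ is_right_copy b &
      hinterval a b `<=` U].

Lemma hext_lt_join (a1 a2 : hext) : exists a : hext, (a = a1 \/ a = a2) /\
  forall t, hext_lt a t -> hext_lt a1 t /\ hext_lt a2 t.
Proof.
case: a1 => [|x|]; first by exists a2; split; [right|].
- case: a2 => [|y|]; first by exists (HPt x); split; [left|].
  + have [->|xy|yx] := hlt_total x y; first by exists (HPt y); split; [right|].
      by exists (HPt y); split=> [|t /= yt]; [right|split=> //; exact: hlt_trans yt].
    by exists (HPt x); split=> [|t /= xt]; [left|split=> //; exact: hlt_trans xt].
  + by exists (@HPosInf R I W); split; [right|].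
- by exists (@HPosInf R I W); split; [left|].
Qed.

Lemma hext_gt_meet (b1 b2 : hext) : exists b : hext, (b = b1 \/ b = b2) /\
  forall t, hext_gt b t -> hext_gt b1 t /\ hext_gt b2 t.
Proof.
case: b1 => [|x|]; first by exists (@HNegInf R I W); split; [left|].
- case: b2 => [|y|]; first by exists (@HNegInf R I W); split; [right|].
  + have [->|xy|yx] := hlt_total x y; first by exists (HPt y); split; [right|].
      by exists (HPt x); split=> [|t /= tx]; [left|split=> //; exact: hlt_trans xy].
    by exists (HPt y); split=> [|t /= ty]; [right|split=> //; exact: hlt_trans yx].
  + by exists (HPt x); split; [left|].
- by exists b2; split; [right|].
Qed.

Lemma hopen_basis_nbhd (U : set X) s : hopen U -> U s -> basis_nbhd U s.
Proof.
move=> oU; move: s; apply: (oU (fun U => forall s, U s -> basis_nbhd U s)).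
- by move=> _ [a [b [-> [_ [nl nr]]]]] s [as_ sb]; exists a, b; split.
- by move=> s _; exists (@HNegInf R I W), (@HPosInf R I W); split.
- move=> A B bA bB s [/bA[a1 [b1 [l1 g1 nl1 nr1 s1]]] /bB[a2 [b2 [l2 g2 nl2 nr2 s2]]]].
  have [a [ea Ha]] := hext_lt_join a1 a2; have [b [eb Hb]] := hext_gt_meet b1 b2.
  exists a, b; split; [by case: ea => ->|by case: eb => ->|by case: ea => ->
    |by case: eb => ->|].
  by move=> t [/Ha[t1 t2] /Hb[t3 t4]]; split; [exact: s1|exact: s2].
- move=> J U' bU s [j _ /bU[a [b [l g nl nr sub]]]].
  by exists a, b; split=> // t /sub; exists j.
Qed.

Lemma hopen_not_isolated (V : set X) s : hopen V -> V s -> exists2 y, V y & y <> s.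
Proof.
move=> oV Vs; have [a [b [l g nl nr sub]]] := hopen_basis_nbhd oV Vs.
have [r [Ir [rs Hr]]] := hinterval_real_pt nl nr (conj l g).
by exists (real_pt Ir); [exact: sub|move=> e; apply: rs; rewrite -e].
Qed.

Definition hconvex (O : set X) : Prop :=
  forall y1 u y2, O y1 -> O y2 -> hle y1 u -> hle u y2 -> O u.

Lemma hinterval_convex (a b : hext) : hconvex (hinterval a b).
Proof.
move=> y1 u y2 [l1 _] [_ g2] h1 h2; split.
- by case: h1 => [<-//|]; exact: hext_lt_trans.
- by case: h2 => [->//|]; exact: hext_gt_trans.
Qed.

Lemma hconvexI (A B : set X) : hconvex A -> hconvex B -> hconvex (A `&` B).
Proof.
by move=> cA cB y1 u y2 [A1 B1] [A2 B2] h1 h2; split; [apply: cA h1 h2|apply: cB h1 h2].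
Qed.

Lemma locally_constant_hconvex (T : Type) (O : set X) (f : X -> T) :
  hconvex O -> locally_constant_on (@hopen R I W) O f ->
  forall y1 y2, O y1 -> O y2 -> f y1 = f y2.
Proof.
move=> cO lcf.
have real_rep y : O y -> exists r (Ir : I r), O (real_pt Ir) /\ f (real_pt Ir) = f y.
  move=> Oy; have [V [oV Vy VO Vf]] := lcf y Oy.
  have [a [b [ay yb nl nr sub]]] := hopen_basis_nbhd oV Vy.
  have [r [Ir [_ Hr]]] := hinterval_real_pt nl nr (conj ay yb).
  by exists r, Ir; split; [exact/VO/sub|exact/Vf/sub].
suff real_const r1 r2 (I1 : I r1) (I2 : I r2) : O (real_pt I1) -> O (real_pt I2) ->
    r1 <= r2 -> f (real_pt I1) = f (real_pt I2).
  move=> y1 y2 /real_rep[r1 [I1 [O1 <-]]] /real_rep[r2 [I2 [O2 <-]]].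
  have [r12|r21] := leP r1 r2; first exact: real_const.
  by apply/esym/real_const => //; exact: ltW.
move=> O1 O2 r12.
have segment r : r1 <= r <= r2 -> exists Ir : I r, O (real_pt Ir).
  move=> /andP[r1r rr2]; have Ir := I_convex I1 I2 r1r rr2.
  by exists Ir; exact: cO O1 O2 (real_pt_le I1 Ir r1r) (real_pt_le Ir I2 rr2).
pose g r := if pselect (I r) is left Ir then f (real_pt Ir) else f (real_pt I1).
have gE r (Ir : I r) : g r = f (real_pt Ir).
  by rewrite /g; case: pselect => [Ir'|//]; rewrite (Prop_irrelevance Ir' Ir).
rewrite -(gE _ I1) -(gE _ I2); apply: segment_locally_constant r12 _ => r /segment[Ir Or].
have [V [oV Vr VO Vf]] := lcf _ Or.
have [a [b [ar rb nl nr sub]]] := hopen_basis_nbhd oV Vr.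
have [e1 e1_gt0 ar'] := below_open (below_hpi nl ar (isT : (htag (real_pt Ir) <= 1)%N)).
have [e2 e2_gt0 r'b] := above_open (above_hpi nr rb (isT : (1 <= htag (real_pt Ir))%N)).
exists (Num.min e1 e2) => [|r' /segment[Ir' _]]; first by rewrite lt_min e1_gt0 e2_gt0.
have [m1 m2] : Num.min e1 e2 <= e1 /\ Num.min e1 e2 <= e2 by rewrite !ge_min !lexx ?orbT.
rewrite ltr_norml => /andP[d1 d2]; rewrite (gE _ Ir') (gE _ Ir); apply/Vf/sub.
by split; [apply/below_real_pt/ar'|apply/above_real_pt/r'b]; rewrite /hpi /=; lra.
Qed.

Lemma least_ofE (a b : hext) (s : X) : least_of (hinterval a b) s <->
  hinterval a b s /\ forall t, hlt t s -> ~ hext_lt a t.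
Proof.
split=> [[[as_ sb] s_least]|[[as_ sb] s_min]].
  split=> [//|t ts at_].
  exact: hle_hlt_absurd (s_least t (conj at_ (hext_gt_trans sb ts))) ts.
split=> // t [at_ tb]; have [->|st|ts] := hlt_total s t; [by left|by right|].
by case: (s_min t ts).
Qed.

Lemma greatest_ofE (a b : hext) (s : X) : greatest_of (hinterval a b) s <->
  hinterval a b s /\ forall t, hlt s t -> ~ hext_gt b t.
Proof.
split=> [[[as_ sb] s_greatest]|[[as_ sb] s_max]].
  split=> [//|t st tb].
  exact: hle_hlt_absurd (s_greatest t (conj (hext_lt_trans as_ st) tb)) st.
split=> // t [at_ tb]; have [->|ts|st] := hlt_total t s; [by left|by right|].
by case: (s_max t st).
Qed.

Lemma least_tag (a b : hext) (s : X) :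
  ~ is_left_copy a -> least_of (hinterval a b) s -> htag s = 2%N.
Proof.
move=> nl /least_ofE[[as_ _] s_min].
have [ts|] := ltnP (htag s) 2; last by have := htag_lt3 s; lia.
have [r [Ir ar rs]] := below_interpolate (hpiI s) (below_hpi nl as_ (ts : (htag s <= 1)%N)).
by case: (s_min (real_pt Ir)); [left|exact: below_real_pt].
Qed.

Lemma greatest_tag (a b : hext) (s : X) :
  ~ is_right_copy b -> greatest_of (hinterval a b) s -> htag s = 0%N.
Proof.
move=> nr /greatest_ofE[[_ sb] s_max].
have [//|ts] := posnP (htag s).
have [r [Ir rb sr]] := above_interpolate (hpiI s) (above_hpi nr sb ts).
by case: (s_max (real_pt Ir)); [left|exact: above_real_pt].
Qed.

Lemma trim_hinterval (a b a' b' : hext) :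
  hinterval a' b = [set y | hinterval a b y /\ ~ least_of (hinterval a b) y] ->
  hinterval a' b' = [set y | hinterval a' b y /\ ~ greatest_of (hinterval a' b) y] ->
  hinterval a' b' = trim (hinterval a b).
Proof.
move=> Ea' Eb'; rewrite Eb'; apply/seteqP; split=> y.
- move=> [a'by not_gr]; have := a'by; rewrite Ea' => -[Hy not_least].
  split=> //; split=> // /greatest_ofE[_ y_max]; exact/not_gr/greatest_ofE.
- move=> [Hy [not_least not_gr]]; have a'by : hinterval a' b y by rewrite Ea'.
  split=> // /greatest_ofE[_ y_max]; exact/not_gr/greatest_ofE.
Qed.

Section LocalSystem.
Variables (k : fieldType) (F : presheaf k (@hopen R I W)).
Hypothesis F_sheaf : is_sheaf F.
Hypothesis F_locally_constant :
  forall x : X, exists U (C : lmodType k), [/\ hopen U, U x & constant_on F U C].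

Lemma res_remove_point_bij (A B : set X) (p : X) (h : B `<=` A) :
  hopen A -> hopen B -> hconvex B -> A p -> (forall y, A y -> ~ B y -> y = p) ->
  bijective (res F h).
Proof.
move=> oA oB cB Ap A_minus_B.
have [U [C [oU Up [phi phiP]]]] := F_locally_constant p.
have [a [b [ap pb nl nr NUA]]] := hopen_basis_nbhd (hopenI oU oA) (conj Up Ap).
have oN := hinterval_open nl nr.
have NU : hinterval a b `<=` U by move=> y /NUA[].
have NA : hinterval a b `<=` A by move=> y /NUA[].
have NB_const := locally_constant_hconvex (hconvexI (@hinterval_convex a b) cB).
rewrite -setTT_bijective; split=> [//|s1 s2 _ _|t _].
  exact: (res_remove_point_inj F_sheaf (@hopenI) phiP oA oB oN h NA NU (conj ap pb)
    A_minus_B (fun V => @hopen_not_isolated V p)).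
have [s <-] := res_remove_point_surj F_sheaf (@hopenI) phiP oA oB oN h NA NU (conj ap pb)
  A_minus_B (fun V => @hopen_not_isolated V p) (@NB_const C) h t.
by exists s.
Qed.

Lemma res_trim_least (a b : hext) : ~ is_left_copy a -> ~ is_right_copy b ->
  exists2 a' : hext, ~ is_left_copy a' &
    hinterval a' b = [set y | hinterval a b y /\ ~ least_of (hinterval a b) y] /\
    forall h : hinterval a' b `<=` hinterval a b, bijective (res F h).
Proof.
move=> nl nr; have oH := hinterval_open nl nr.
have [[s s_least]|no_least] := pselect (exists s, least_of (hinterval a b) s); last first.
  exists a => //; split=> [|h]; last by exists id => x; rewrite res_id.
  by apply/seteqP; split=> [y Hy|y []//]; split=> // y_least; apply: no_least; exists y.
have nls : ~ is_left_copy (HPt s) by move=> [_]; rewrite (least_tag nl s_least).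
have [[as_ sb] s_le] := s_least.
exists (HPt s) => //; split=> [|h].
  apply/seteqP; split=> [y [sy yb]|y [[ay yb] y_nleast]].
  - split; first by split=> //; exact: hext_lt_trans as_ sy.
    by move=> /least_ofE[_ /(_ s sy)]; apply.
  - split=> //=; have [e|//] := s_le y (conj ay yb); by rewrite -e in y_nleast.
apply: (res_remove_point_bij (p := s)) => //; first exact: hinterval_open.
  exact: hinterval_convex.
move=> y [ay yb] y_notin; have [//|sy] := s_le y (conj ay yb).
by case: y_notin; split.
Qed.

Lemma res_trim_greatest (a b : hext) : ~ is_left_copy a -> ~ is_right_copy b ->
  exists2 b' : hext, ~ is_right_copy b' &
    hinterval a b' = [set y | hinterval a b y /\ ~ greatest_of (hinterval a b) y] /\
    forall h : hinterval a b' `<=` hinterval a b, bijective (res F h).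
Proof.
move=> nl nr; have oH := hinterval_open nl nr.
have [[s s_greatest]|no_greatest] := pselect (exists s, greatest_of (hinterval a b) s); last first.
  exists b => //; split=> [|h]; last by exists id => x; rewrite res_id.
  by apply/seteqP; split=> [y Hy|y []//]; split=> // y_gr; apply: no_greatest; exists y.
have nrs : ~ is_right_copy (HPt s) by move=> [_]; rewrite (greatest_tag nr s_greatest).
have [[as_ sb] s_ge] := s_greatest.
exists (HPt s) => //; split=> [|h].
  apply/seteqP; split=> [y [ay ys]|y [[ay yb] y_ngr]].
  - split; first by split=> //; exact: hext_gt_trans sb ys.
    by move=> /greatest_ofE[_ /(_ s ys)]; apply.
  - split=> //=; have [e|//] := s_ge y (conj ay yb); by rewrite e in y_ngr.
apply: (res_remove_point_bij (p := s)) => //; first exact: hinterval_open.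
  exact: hinterval_convex.
move=> y [ay yb] y_notin; have [//|ys] := s_ge y (conj ay yb).
by case: y_notin; split.
Qed.

End LocalSystem.
End DividedInterval.

Unset Implicit Arguments.
Set Strict Implicit.

Theorem lemma3p4 (R : realType) (I W : set R)
    (k : fieldType) (RG : vectType k) (G : (RG -> RG) -> Prop)
    (F : presheaf k (@hopen R I W)) :
  open_interval I -> W `<=` I -> countable W ->
  linear_group G ->
  G_local_system G F ->
  forall H : set (hatI I W), basis_interval H ->
    bijective (res F (@trim_sub R I W H)).
Proof.
move=> I_open _ _ _ [F_sheaf _ _ F_loc _] _ [a [b [-> [_ [nla nrb]]]]].
have F_lc : forall x, exists U (C : lmodType k), [/\ hopen U, U x & constant_on F U C].
  by move=> x; have [U [C [? ? _ ?]]] := F_loc x; exists U, C.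
have [a' nla' [Ea' bij_a']] := res_trim_least I_open F_sheaf F_lc nla nrb.
have [b' nrb' [Eb' bij_b']] := res_trim_greatest I_open F_sheaf F_lc nla' nrb.
have sub_a' : hinterval a' b `<=` hinterval a b by rewrite Ea' => y [].
have sub_b' : hinterval a' b' `<=` hinterval a' b by rewrite Eb' => y [].
have bij : bijective (res F (subset_trans sub_b' sub_a')).
  apply: (eq_bij (bij_comp (bij_b' sub_b') (bij_a' sub_a'))) => s /=.
  by apply: res_comp; apply: hinterval_open.
exact: res_bijective_eq (trim_hinterval Ea' Eb') bij.
Qed.
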